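(* Consider an execution of algorithm $\mathcal{A}_2$ (described in the context) in a synchronous message-passing system of $n$ processes with authentication in which up to $t<n$ processes are Byzantine. If all correct processes propose the same value $v$, then all correct processes decide $v$.
   Context: Model: synchronous rounds, reliable channels between all pairs, unforgeable signatures, up to $t$ Byzantine processes; the others are correct. Terminating Reliable Broadcast (TRB) with sender $p$: $p$ broadcasts a value $m$ and every process delivers either a value or a special value $SF$, satisfying: (Termination) every correct process delivers some value; (Validity) if the sender is correct and broadcasts $m$, every correct process delivers $m$; (Integrity) a process delivers at most once, and if it delivers $m\ne SF$ then $m$ was broadcast by the sender; (Agreement) if a correct process delivers $m$, all correct processes deliver $m$. TRB is implemented in this model in $t+1$ rounds by the classical authenticated signature-chain algorithm. Algorithm $\mathcal{A}_2$, code of $p_i$ with input $v_i$: Phase 1: $n$ instances of TRB are run, instance $q$ having $p_q$ as sender; $p_i$ broadcasts $v_i$ in its own instance and sets $L_i[p_i] := v_i$; for each process $q$, $p_i$ sets $L_i[q]$ to the value (possibly $SF$) delivered in the instance with sender $q$. Phase 2: if at least $n-t$ entries of $L_i$ equal $v_i$, decide $v_i$; else, if some value $v$ appears at least $n-t$ times in $L_i$, decide such a $v$; else decide $\bot$. *)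

From mathcomp Require Import all_boot.
Set Implicit Arguments. Unset Strict Implicit. Unset Printing Implicit Defensive.

(* Processes are 'I_n.  Delivered TRB values are [option V]: [None] = SF.
   Decisions are [option V]: [None] = bottom. *)

(* Abstract guarantees of the n TRB instances of Phase 1 in an execution:
   [deliver i q] is the value (or SF) delivered by p_i in the instance with
   sender p_q (termination is built in: it is a total function);
   [inp q] is the value broadcast by p_q (its input when p_q is correct). *)
Definition TRB_validity (n : nat) (V : eqType) (correct : {set 'I_n})
  (inp : 'I_n -> V) (deliver : 'I_n -> 'I_n -> option V) : Prop :=
  forall q i, q \in correct -> i \in correct -> deliver i q = Some (inp q).

Definition TRB_agreement (n : nat) (V : eqType) (correct : {set 'I_n})
  (deliver : 'I_n -> 'I_n -> option V) : Prop :=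
  forall q i j, i \in correct -> j \in correct -> deliver i q = deliver j q.

Definition TRB_integrity (n : nat) (V : eqType) (correct : {set 'I_n})
  (inp : 'I_n -> V) (deliver : 'I_n -> 'I_n -> option V) : Prop :=
  forall q i m, q \in correct -> deliver i q = Some m -> m = inp q.

Definition A2_L (n : nat) (V : eqType) (inp : 'I_n -> V)
  (deliver : 'I_n -> 'I_n -> option V) (i : 'I_n) : 'I_n -> option V :=
  fun q => if q == i then Some (inp i) else deliver i q.

Definition occ (n : nat) (V : eqType) (L : 'I_n -> option V) (w : V) : nat :=
  #|[set q | L q == Some w]|.

Definition A2_decides (n t : nat) (V : eqType) (L : 'I_n -> option V) (vi : V)
  (d : option V) : Prop :=
  (n - t <= occ L vi /\ d = Some vi)
  \/ (occ L vi < n - t /\ exists w, n - t <= occ L w /\ d = Some w)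
  \/ (occ L vi < n - t /\ (forall w, occ L w < n - t) /\ d = None).

From mathcomp Require Import all_boot.

(* By TRB validity a correct process records the (common) input of every
   correct sender, so its own input fills at least [n - t] entries of its
   array and Phase 2 takes the first branch. *)

Lemma A2_decides_own {n t : nat} {V : eqType} {L : 'I_n -> option V} {vi : V}
    {d : option V} :
  n - t <= occ L vi -> A2_decides t L vi d <-> d = Some vi.
Proof.
move=> big; split=> [|->]; last by left.
by case=> [[_ ->] | [[small _] | [small _]]] //; rewrite ltnNge big in small.
Qed.

Lemma card_ge_sub_faulty {n t : nat} {correct : {set 'I_n}} :
  #|~: correct| <= t -> n - t <= #|correct|.
Proof.
move=> faulty; rewrite leq_subLR -[n in n <= _]card_ord -(cardsC correct).
by rewrite addnC leq_add2r.
Qed.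

Lemma occ_ge_card {n : nat} {V : eqType} {L : 'I_n -> option V} {w : V}
    {A : {set 'I_n}} :
  {in A, forall q, L q = Some w} -> #|A| <= occ L w.
Proof.
by move=> LA; apply/subset_leq_card/subsetP => q /LA Lq; rewrite inE Lq.
Qed.

Lemma A2_L_correct {n : nat} {V : eqType} {correct : {set 'I_n}}
    {inp : 'I_n -> V} {deliver : 'I_n -> 'I_n -> option V} {v : V} {i : 'I_n} :
  TRB_validity correct inp deliver ->
  {in correct, forall q, inp q = v} -> i \in correct ->
  {in correct, forall q, A2_L inp deliver i q = Some v}.
Proof.
move=> valid inp_v Ci q Cq; rewrite /A2_L.
by case: eqP => [<-|_]; rewrite ?valid ?inp_v.
Qed.

Theorem lemma8 (n t : nat) (V : eqType) (correct : {set 'I_n})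
  (inp : 'I_n -> V) (deliver : 'I_n -> 'I_n -> option V) (v : V) :
  t < n ->
  #|~: correct| <= t ->
  TRB_validity correct inp deliver ->
  TRB_agreement correct deliver ->
  TRB_integrity correct inp deliver ->
  (forall i, i \in correct -> inp i = v) ->
  forall i, i \in correct ->
    forall d, A2_decides t (A2_L inp deliver i) (inp i) d <-> d = Some v.
Proof.
move=> _ faulty valid _ _ inp_v i Ci d.
rewrite inp_v //; apply: A2_decides_own.
apply: (leq_trans (card_ge_sub_faulty faulty)).
exact/occ_ge_card/(A2_L_correct valid).
Qed.
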